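(* Let $X$ be a correlator of type $X_{-1}$ and let $W_1=x_1^{a_1}x_2+x_2^{a_2}x_3+\dots+x_N^{a_N}$ be a chain summand with $K_{W_1}=1$. Then $K_N\le\ell_N$. If moreover $K_N\ge0$, then the sequence $\mathbf K=(K_1,\dots,K_N)$ is either a concatenation of blocks $(0)$ and $(-1,1)$ followed by a final entry $1$, or a concatenation of blocks $(0)$ and $(-1,1)$ together with exactly one block among $(-1,2)$, $(-2,3)$, $(1)$, followed by a final entry $0$.
   Context: $W=\bigoplus_jW_j$ is an invertible polynomial written as a disjoint sum of atomic summands (variables relabeled within each summand), $E_W$ its exponent matrix, $K_{W_1}=\sum_{i\in W_1}K_i$. A genus-zero correlator (B-model of $W^T$, or A-model of $(W,G_W)$ via Krawitz's map) is of type $X_{-1}$ if it has at least four insertions, has the form $\langle x_N,\dots,x_N,\dots,x_1,\dots,x_1,\alpha,\beta\rangle$ with $x_i$ appearing $\ell_i\ge0$ times and $\alpha=\prod x_i^{m_i}$, $\beta=\prod x_i^{n_i}$ monomials of the standard basis of $\mathrm{Jac}(W^T)$, and, with $b=E_W^{-1}(\ell+m+n+2\cdot\mathbf 1)$ and $K_i=\ell_i-b_i+1$, satisfies $K_i\in\mathbb Z$ and $\sum_iK_i=1$. For a chain summand, the standard basis of its transpose $x_1^{a_1}+x_1x_2^{a_2}+\dots+x_{N-1}x_N^{a_N}$ consists of $\prod x_i^{r_i}$ with $r_i\le a_i-1$ excluding $r_N=a_N-1,r_{N-1}=0,\dots,r_{N-2l}=a_{N-2l}-1,r_{N-2l-1}\ge1$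 ($l\ge0$). *)

From HB Require Import structures.
From mathcomp Require Import all_boot all_order all_algebra.
Set Implicit Arguments. Unset Strict Implicit. Unset Printing Implicit Defensive.
Import Order.TTheory GRing.Theory Num.Theory.

(* Atomic summands of an invertible polynomial (0-indexed variables). *)
(*  Fermat a      :  x_1^a                                             *)
(*  Chain [a_1..a_N] : x_1^{a_1}x_2 + ... + x_{N-1}^{a_{N-1}}x_N + x_N^{a_N} *)
(*  Loop  [a_1..a_N] : x_1^{a_1}x_2 + ... + x_N^{a_N}x_1               *)
Inductive atomic := Fermat of nat | Chain of seq nat | Loop of seq nat.

Definition asize (A : atomic) : nat :=
  match A with Fermat _ => 1 | Chain s => size s | Loop s => size s end.

Definition atomic_wf (A : atomic) : bool :=
  match A with
  | Fermat a => 2 <= a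
  | Chain s => (1 <= size s) && all (fun a => 2 <= a) s
  | Loop s => (2 <= size s) && all (fun a => 2 <= a) s
  end.

(* Entry (row = monomial i, column = variable j) of the exponent matrix
   of an atomic summand. *)
Definition loc_ent (A : atomic) (i j : nat) : nat :=
  match A with
  | Fermat a => if (i == 0) && (j == 0) then a else 0
  | Chain s => if (i < size s) && (j < size s) then
                 (if j == i then nth 0 s i else if j == i.+1 then 1 else 0)
               else 0
  | Loop s => if (i < size s) && (j < size s) then
                (if j == i then nth 0 s i
                 else if j == i.+1 %% size s then 1 else 0)
              else 0
  end.

(* Entries of the (block diagonal) exponent matrix E_W of W = (+)_j W_j. *)
Fixpoint Eent (ws : seq atomic) (i j : nat) : nat :=
  match ws with
  | [::] => 0
  | A :: ws' =>
      let k := asize A in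
      if (i < k) && (j < k) then loc_ent A i j
      else if (k <= i) && (k <= j) then Eent ws' (i - k) (j - k)
      else 0
  end.

Definition nvars (ws : seq atomic) : nat := sumn (map asize ws).

(* Standard basis of Jac(A^T), on local exponent vectors r (0-indexed). *)
(* Chain transpose x_1^{a_1}+x_1x_2^{a_2}+...+x_{N-1}x_N^{a_N}: r_i <= a_i - 1,
   excluding (1-indexed) r_N=a_N-1, r_{N-1}=0, ..., r_{N-2l}=a_{N-2l}-1,
   r_{N-2l-1}>=1 (l>=0), the last condition being void when N-2l-1 = 0. *)
Definition chain_excluded (s : seq nat) (r : nat -> nat) (l : nat) : bool :=
  let N := size s in
  [&& 2 * l < N,
      all (fun k => r (N - 2 * k).-1 == (nth 0 s (N - 2 * k).-1).-1) (iota 0 l.+1),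
      all (fun k => r (N - 2 * k - 1).-1 == 0) (iota 0 l)
    & (N - 2 * l - 1 == 0) || (1 <= r (N - 2 * l - 1).-1)].

Definition loc_basis (A : atomic) (r : nat -> nat) : bool :=
  match A with
  | Fermat a => r 0 <= a - 2
  | Chain s => all (fun i => r i <= (nth 0 s i).-1) (iota 0 (size s)) &&
               ~~ has (chain_excluded s r) (iota 0 (size s))
  | Loop s => all (fun i => r i <= (nth 0 s i).-1) (iota 0 (size s))
  end.

(* r : exponent vector of a monomial in all variables of W^T. *)
Fixpoint in_std_basis (ws : seq atomic) (r : nat -> nat) : bool :=
  match ws with
  | [::] => true
  | A :: ws' => loc_basis A r && in_std_basis ws' (fun i => r (i + asize A))
  end.

Local Open Scope ring_scope.

Definition EW (ws : seq atomic) : 'M[rat]_(nvars ws) :=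
  \matrix_(i, j) (Eent ws i j)%:R.

Definition bvec (ws : seq atomic) (l m n : nat -> nat) (i : nat) : rat :=
  let v : 'cV[rat]_(nvars ws) := \col_k (l k + m k + n k + 2)%N%:R in
  match @insub _ (fun k => (k < nvars ws)%N) _ i with
  | Some i' => (invmx (EW ws) *m v) i' ord0
  | None => 0
  end.

Definition Kvec (ws : seq atomic) (l m n : nat -> nat) (i : nat) : rat :=
  (l i)%:R - bvec ws l m n i + 1.

Definition is_integer (x : rat) : Prop := exists z : int, x = z%:~R.

(* Correlator <x_N..x_N,...,x_1..x_1, alpha, beta> of type X_{-1};
   x_i appears l i times, alpha = prod x_i^{m i}, beta = prod x_i^{n i}. *)
Definition type_Xm1 (ws : seq atomic) (l m n : nat -> nat) : Prop :=
  [/\ (4 <= (\sum_(i < nvars ws) l i) + 2)%N,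
      in_std_basis ws m, in_std_basis ws n,
      forall i, (i < nvars ws)%N -> is_integer (Kvec ws l m n i)
    & \sum_(i < nvars ws) Kvec ws l m n i = 1].

Definition basic_block (s : seq rat) : bool := (s == [:: 0]) || (s == [:: -1; 1]).
Definition special_block (s : seq rat) : bool :=
  [|| s == [:: -1; 2], s == [:: -2; 3] | s == [:: 1]].

Definition K_shape (s : seq rat) : Prop :=
  (exists bs : seq (seq rat), all basic_block bs /\ s = flatten bs ++ [:: 1]) \/
  (exists (bs1 bs2 : seq (seq rat)) (sp : seq rat),
      [/\ all basic_block bs1, all basic_block bs2, special_block sp
        & s = flatten bs1 ++ sp ++ flatten bs2 ++ [:: 0]]).

From HB Require Import structures.
From mathcomp Require Import all_boot all_order all_algebra.
From mathcomp Require Import zify ring lra.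
Set Implicit Arguments. Unset Strict Implicit. Unset Printing Implicit Defensive.
Import Order.TTheory GRing.Theory Num.Theory.

(* E_W is invertible (its rows are strictly diagonally dominant), and the rows
   of E_W b = l + m + n + 2 belonging to the chain read, 0-indexed,
   a_k b_k + b_(k+1) = l_k + m_k + n_k + 2 with b_N = 0, K_k = l_k + 1 - b_k and
   0 <= m_k, n_k <= a_k - 1. The last row gives a_(N-1) b_(N-1) >= 2, so
   b_(N-1) >= 1, i.e. K_(N-1) <= l_(N-1). For the shape, the potential
   pot b = b - 2 (b >= 2), 1 - b (b <= 1) satisfies K_k >= pot b_k - pot b_(k+1);
   as the K_k sum to 1 and pot b_N = 1, the total slack of these inequalities is
   2 - pot b_0 <= 2. So a chain is a walk through finitely many configurations
   (b_k, remaining slack, state of an automaton recognising the admissible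
   shapes), and evaluating this finite transition system shows that every walk
   ending with K_(N-1) >= 0 is accepted. *)

Lemma loc_ent_offdiag A i :
  exists c, forall j, j != i -> loc_ent A i j <= (j == c).
Proof.
case: A => [a|s|s] /=.
- by exists 0 => j ji; case: ifP => // /andP[/eqP i0 /eqP j0]; rewrite i0 j0 eqxx in ji.
- exists i.+1 => j /negbTE ->; case: ifP => // _; by case: ifP.
- exists (i.+1 %% size s) => j /negbTE ->; case: ifP => // _; by case: ifP.
Qed.

Lemma Eent_offdiag ws i :
  exists c, forall j, j != i -> Eent ws i j <= (j == c).
Proof.
elim: ws i => [|A ws IH] i /=; first by exists 0.
have [lt_iA|le_Ai] := ltnP i (asize A).
  have [c hc] := loc_ent_offdiag A i.
  by exists c => j ji /=; case: ifP => _ //; apply: hc.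
have [c hc] := IH (i - asize A).
exists (c + asize A) => j ji /=.
case: (leqP (asize A) j) => //= le_Aj.
apply: (leq_trans (hc _ _)); first by apply: contra ji => /eqP; lia.
by case: eqP => // <-; rewrite subnK ?eqxx.
Qed.

Lemma Eent_diag ws i : all atomic_wf ws -> i < nvars ws -> 2 <= Eent ws i i.
Proof.
elim: ws i => [|A ws IH] i //= /andP[wfA wf] lt_i.
case: (ltnP i (asize A)) => [lt_iA|le_Ai] /=.
  2: by apply: IH => //; move: (lt_i : i < asize A + nvars ws); lia.
case: A wfA lt_iA {lt_i} => [a|s|s] /= wfA lt_iA.
- by move: lt_iA; rewrite ltnS leqn0 => /eqP ->.
- by rewrite lt_iA eqxx; case/andP: wfA => _ /allP; apply; apply: mem_nth.
- by rewrite lt_iA eqxx; case/andP: wfA => _ /allP; apply; apply: mem_nth.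
Qed.

Local Open Scope ring_scope.

Lemma unitmx_diag_dominant (R : realFieldType) n (A : 'M[R]_n) :
  (forall i, \sum_(j | j != i) `|A i j| < `|A i i|) -> A \in unitmx.
Proof.
move=> dom; rewrite -unitmx_tr -row_free_unit; apply: inj_row_free => v vA0.
apply/rowP => j0; rewrite mxE.
have [i0 _ vmax] := @arg_maxP _ _ _ j0 xpredT (fun i => `|v 0 i|) isT.
have row0 : \sum_j v 0 j * A i0 j = 0.
  transitivity ((v *m A^T) 0 i0); last by rewrite vA0 mxE.
  by rewrite mxE; apply: eq_bigr => j _; rewrite mxE.
have bound : `|v 0 i0| * `|A i0 i0| <= `|v 0 i0| * \sum_(j | j != i0) `|A i0 j|.
  rewrite (bigD1 i0) //= in row0.
  rewrite -normrM (_ : v 0 i0 * A i0 i0 = - \sum_(j | j != i0) v 0 j * A i0 j); last first.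
    by apply/eqP; rewrite -addr_eq0 row0.
  rewrite normrN mulr_sumr; apply: le_trans (ler_norm_sum _ _ _) _.
  apply: ler_sum => j _; rewrite normrM; apply: ler_wpM2r => //; exact: vmax.
have [vi0|vi0] := eqVneq (v 0 i0) 0.
  by have := vmax j0 isT; rewrite /= vi0 normr0 normr_le0 => /eqP.
by move: bound; rewrite ler_pM2l ?normr_gt0 // leNgt dom.
Qed.

Lemma big_ord_pick (R : pzSemiRingType) n p (G : nat -> R) :
  \sum_(j < n) ((j : nat) == p)%:R * G j = if (p < n)%N then G p else 0.
Proof.
case: (ltnP p n) => [lt_pn|le_np].
  rewrite (bigD1 (Ordinal lt_pn)) //= eqxx mul1r big1 ?addr0 // => j /eqP jp.
  by rewrite (_ : _ == _ = false) ?mul0r //; apply/eqP => pj; apply: jp; apply: val_inj.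
rewrite big1 // => j _; rewrite (_ : _ == _ = false) ?mul0r //.
by apply/eqP => pj; move: (ltn_ord j); rewrite pj ltnNge le_np.
Qed.

Lemma unitmx_EW ws : all atomic_wf ws -> EW ws \in unitmx.
Proof.
move=> wf; apply: unitmx_diag_dominant => i; rewrite mxE normr_nat.
have [c hc] := Eent_offdiag ws i.
have off : \sum_(j | j != i) `|EW ws i j| <= \sum_(j < nvars ws) ((j : nat) == c)%:R * 1.
  rewrite [X in _ <= X](bigD1 i) //= -[X in X <= _]add0r lerD ?mulr1 ?ler0n //.
  by apply: ler_sum => j ji; rewrite mxE normr_nat mulr1 ler_nat hc.
apply: (le_lt_trans off); rewrite (big_ord_pick _ _ (fun _ => 1)).
by apply: (@le_lt_trans _ _ 1); [case: ifP | rewrite ltr1n Eent_diag].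
Qed.

Lemma EW_bvec ws l m n i : all atomic_wf ws -> (i < nvars ws)%N ->
  \sum_(j < nvars ws) (Eent ws i j)%:R * bvec ws l m n j = (l i + m i + n i + 2)%:R.
Proof.
move=> wf lt_i.
have := congr1 (fun M : 'cV[rat]_(nvars ws) => M (Ordinal lt_i) 0)
  (mulKVmx (unitmx_EW wf) (\col_k (l k + m k + n k + 2)%:R)).
rewrite !mxE /= => <-; apply: eq_bigr => j _.
by rewrite /bvec valK !mxE.
Qed.

Lemma nvars_take_nth ws j : (j < size ws)%N ->
  (nvars (take j ws) + asize (nth (Fermat 2) ws j) <= nvars ws)%N.
Proof.
elim: ws j => [|B ws IH] [|j] //= lt_j; first by rewrite leq_addr.
by rewrite /nvars /= -addnA leq_add2l; apply: IH.
Qed.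

Lemma Eent_block ws j k jj : (j < size ws)%N ->
  let A := nth (Fermat 2) ws j in let o := nvars (take j ws) in
  (k < asize A)%N ->
  Eent ws (o + k) jj =
  if (o <= jj < o + asize A)%N then loc_ent A k (jj - o) else 0%N.
Proof.
elim: ws j jj => [|B ws IH] [|j] jj //= lt_j lt_k.
  rewrite (_ : nvars [::] = 0%N) // !add0n lt_k subn0 /=.
  by case: ifP => //; rewrite (leqNgt _ k) lt_k.
rewrite /nvars /= -/(nvars _).
have -> : (asize B + nvars (take j ws) + k < asize B)%N = false by lia.
rewrite -addnA leq_addr addKn /=.
case: (leqP (asize B) jj) => le_B /=; last by rewrite ifF //; lia.
rewrite IH // -subnDA.
by congr (if _ then _ else _); lia.
Qed.

Lemma Eent_chain ws j as_ k jj : (j < size ws)%N ->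
  nth (Fermat 2) ws j = Chain as_ -> (k < size as_)%N ->
  let o := nvars (take j ws) in
  Eent ws (o + k) jj =
  ((jj == o + k) * nth 0 as_ k + ((jj == o + k.+1) && (k.+1 < size as_)))%N.
Proof.
move=> lt_j nth_j lt_k o.
have := Eent_block (k := k) jj lt_j; rewrite nth_j -/o /= => /(_ lt_k) ->.
case: (leqP o jj) => [le_o|lt_o] /=; last first.
  by have [-> ->] : (jj == o + k) = false /\ (jj == o + k.+1) = false
    by split; apply/eqP; lia.
rewrite -(subnKC le_o) addKn ltn_add2l !eqn_add2l lt_k; move: (jj - o)%N => d.
case: (ltnP d (size as_)) => [lt_d|le_d] /=.
  case: (eqVneq d k) => [->|_]; first by rewrite (ltn_eqF (ltnSn k)) mul1n addn0.
  by case: (eqVneq d k.+1) => [eq_d|]; rewrite ?eq_d ?eqxx -?eq_d ?lt_d.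
rewrite (_ : d == k = false) /=; last by apply/eqP; lia.
by case: (eqVneq d k.+1) => [eq_d|] //=; move: le_d; rewrite eq_d leqNgt => /negbTE ->.
Qed.

Lemma bvec_chain_row ws j as_ l m n k : all atomic_wf ws -> (j < size ws)%N ->
  nth (Fermat 2) ws j = Chain as_ -> (k < size as_)%N ->
  let o := nvars (take j ws) in
  (nth 0%N as_ k)%:R * bvec ws l m n (o + k) +
  (if (k.+1 < size as_)%N then bvec ws l m n (o + k.+1) else 0) =
  (l (o + k) + m (o + k) + n (o + k) + 2)%:R.
Proof.
move=> wf lt_j nth_j lt_k /=.
have := nvars_take_nth lt_j; rewrite nth_j /= => le_o.
rewrite -(@EW_bvec ws l m n (_ + k) wf); last by lia.
under eq_bigr => jj _ do
  rewrite (Eent_chain jj lt_j nth_j lt_k) natrD natrM -mulnb natrM mulrDl -!mulrA.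
rewrite big_split /= (big_ord_pick _ _ (fun i => (nth 0%N as_ k)%:R * bvec ws l m n i)).
rewrite (big_ord_pick _ _ (fun i => (k.+1 < size as_)%:R * bvec ws l m n i)).
have lt0 : (nvars (take j ws) + k < nvars ws)%N by lia.
case: ifP => [lt_k1|_]; last by rewrite lt0 mul0r if_same.
have lt1 : (nvars (take j ws) + k.+1 < nvars ws)%N by lia.
by rewrite lt0 lt1 mul1r.
Qed.

Lemma std_basis_chain_le ws r j as_ k : in_std_basis ws r -> (j < size ws)%N ->
  nth (Fermat 2) ws j = Chain as_ -> (k < size as_)%N ->
  (r (nvars (take j ws) + k) <= (nth 0%N as_ k).-1)%N.
Proof.
elim: ws r j => [|B ws IH] r [|j] //= /andP[locB std] lt_j.
  move=> eB lt_k; move: locB; rewrite eB /= => /andP[/allP/(_ k) bound _]; apply: bound.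
  by rewrite mem_iota lt_k.
move=> nth_j lt_k; have := IH _ _ std lt_j nth_j lt_k.
rewrite (_ : nvars (B :: take j ws) + k = nvars (take j ws) + k + asize B)%N //.
by rewrite /nvars /=; lia.
Qed.

(* An automaton reading K: [Pre] (resp. [Post]) means that a concatenation of
   basic blocks has been read, before (resp. after) the special block, and
   [PreNeg1], [PreNeg2], [PostNeg1] that a block has been entered. A [1] read in
   [Pre] is either the final entry or the special block [(1)]: [Acc] records the
   first reading and continues like [Post] for the second. *)
Inductive shape_state := Pre | PreNeg1 | PreNeg2 | Post | PostNeg1 | Acc | Dead.

Definition shape_state_eqb (p q : shape_state) : bool :=
  match p, q with
  | Pre, Pre | PreNeg1, PreNeg1 | PreNeg2, PreNeg2 | Post, Post
  | PostNeg1, PostNeg1 | Acc, Acc | Dead, Dead => true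
  | _, _ => false
  end.

Lemma shape_state_eqP : Equality.axiom shape_state_eqb.
Proof. by do 2 case; constructor. Qed.

HB.instance Definition _ := hasDecEq.Build shape_state shape_state_eqP.

Definition shape_step (q : shape_state) (k : int) : shape_state :=
  match q with
  | Pre => if k == 0 then Pre else if k == -1 then PreNeg1
           else if k == -2 then PreNeg2 else if k == 1 then Acc else Dead
  | PreNeg1 => if k == 1 then Pre else if k == 2 then Post else Dead
  | PreNeg2 => if k == 3 then Post else Dead
  | Post | Acc => if k == 0 then Acc else if k == -1 then PostNeg1 else Dead
  | PostNeg1 => if k == 1 then Post else Dead
  | Dead => Dead
  end.

Definition shape_run (q : shape_state) (w : seq int) : shape_state :=
  foldl shape_step q w.

Definition blocks_then0 (w : seq rat) : Prop :=
  exists2 bs : seq (seq rat), all basic_block bs & w = flatten bs ++ [:: 0].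

Lemma shape_run_Dead w : shape_run Dead w = Dead.
Proof. by elim: w. Qed.

Lemma shape_run_cons q k w : shape_run q (k :: w) = shape_run (shape_step q k) w.
Proof. by []. Qed.

Lemma shape_run_Post (w : seq int) :
  [/\ shape_run Post w = Acc -> blocks_then0 (map intr w),
      shape_run Acc w = Acc -> w = [::] \/ blocks_then0 (map intr w)
    & shape_run PostNeg1 w = Acc ->
      exists2 w', w = 1 :: w' & blocks_then0 (map intr w')].
Proof.
elim: w => [|k w [IHpost IHacc IHneg]]; first by split => //; left.
have post : shape_run Post (k :: w) = Acc -> blocks_then0 (map intr (k :: w)).
  rewrite shape_run_cons /=; case: ifP => [/eqP -> /IHacc [->|[bs hbs ->]] | _].
  - by exists [::].
  - by exists ([:: 0] :: bs); rewrite //= hbs.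
  case: ifP => [/eqP -> /IHneg [w' -> [bs hbs hw']] | _]; last by rewrite shape_run_Dead.
  by exists ([:: -1; 1] :: bs); rewrite /= ?hbs //= hw'.
split => [//||]; first by move/post; right.
rewrite shape_run_cons /=; case: ifP => [/eqP -> /IHpost|_]; first by exists w.
by rewrite shape_run_Dead.
Qed.

Lemma K_shape_cat_block (bl w : seq rat) :
  basic_block bl -> K_shape w -> K_shape (bl ++ w).
Proof.
move=> hbl [[bs [hbs ->]] | [bs1 [bs2 [sp [h1 h2 h3 ->]]]]].
  by left; exists (bl :: bs); rewrite /= hbl hbs catA.
by right; exists (bl :: bs1), bs2, sp; rewrite /= hbl h1 catA.
Qed.

Lemma shape_run_Pre_cases (w : seq int) :
  [/\ shape_run Pre w = Acc -> K_shape (map intr w),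
      shape_run PreNeg1 w = Acc -> K_shape (map intr (-1 :: w))
    & shape_run PreNeg2 w = Acc -> K_shape (map intr (-2 :: w))].
Proof.
elim: w => [|k w [IHpre IHneg1 IHneg2]]; first by [].
have [post0 acc0 _] := shape_run_Post w.
split; rewrite shape_run_cons /=.
- case: ifP => [/eqP -> /IHpre|_].
    by rewrite -[_ :: _]/([:: 0%:~R] ++ _); apply: K_shape_cat_block.
  case: ifP => [/eqP -> /IHneg1 //|_].
  case: ifP => [/eqP -> /IHneg2 //|_].
  case: ifP => [/eqP -> |_]; last by rewrite shape_run_Dead.
  case/acc0 => [->|[bs hbs hw]]; first by left; exists [::].
  by right; exists [::], bs, [:: 1]; rewrite /= hw.
- case: ifP => [/eqP -> /IHpre|_].
    by rewrite -[_ :: _]/([:: (-1)%:~R; 1%:~R] ++ _); apply: K_shape_cat_block.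
  case: ifP => [/eqP -> /post0 [bs hbs hw]|_]; last by rewrite shape_run_Dead.
  by right; exists [::], bs, [:: -1; 2]; rewrite /= hw.
- case: ifP => [/eqP -> /post0 [bs hbs hw]|_]; last by rewrite shape_run_Dead.
  by right; exists [::], bs, [:: -2; 3]; rewrite /= hw.
Qed.

Lemma shape_run_sound (w : seq int) :
  shape_run Pre w = Acc -> K_shape (map intr w).
Proof. by case: (shape_run_Pre_cases w). Qed.

(* A necessary condition, with [a] eliminated, for a chain row
   [a * b + b' = l + s + 2] with [a >= 2], [l = K + b - 1 >= 0] and
   [0 <= s <= 2a - 2]. *)
Definition chain_step (b b' K : int) : bool :=
  let l := K + b - 1 in
  [&& 0 <= l, (2 <= b) ==> (2 * (b - 2) <= l - b')
    & (b <= 0) ==> (l - b' <= 2 * b - 2)].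

Lemma chain_step_of_row (a s l b b' : int) :
  2 <= a -> 0 <= s <= 2 * a - 2 -> 0 <= l ->
  a * b + b' = l + s + 2 -> chain_step b b' (l + 1 - b).
Proof.
move=> a_ge2 /andP[s_ge0 s_le] l_ge0 row.
rewrite /chain_step (_ : l + 1 - b + b - 1 = l); last by ring.
rewrite l_ge0; apply/andP; split; apply/implyP => hb; nia.
Qed.

Definition pot (b : int) : int := if 2 <= b then b - 2 else 1 - b.

Definition slack (b b' K : int) : int := K + pot b' - pot b.

Lemma slack_ge0 b b' K : chain_step b b' K -> 0 <= slack b b' K.
Proof. rewrite /chain_step /slack /pot => /and3P[]; do 2 case: ifP; lia. Qed.

Lemma chain_step_bounds b b' K : b <= 4 -> chain_step b b' K ->
  slack b b' K <= 2 -> (-6 <= b' <= 4) && (-3 <= K <= 4).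
Proof. rewrite /chain_step /slack /pot => hb /and3P[]; do 2 case: ifP; lia. Qed.

Lemma chain_step_last b K : chain_step b 0 K -> 1 <= b.
Proof. rewrite /chain_step => /and3P[]; lia. Qed.

Definition zrange (lo : int) (n : nat) : seq int := [seq lo + k%:Z | k <- iota 0 n].

Lemma mem_zrange (lo z : int) (n : nat) :
  lo <= z < lo + n%:Z -> z \in zrange lo n.
Proof.
move=> /andP[lo_z z_lt]; apply/mapP; exists `|z - lo|%N.
  by rewrite mem_iota add0n; lia.
by rewrite gez0_abs ?subr_ge0 //; ring.
Qed.

(* Configurations [(b_i, r_i, q_i)]: current entry of [b], remaining slack budget
   and automaton state. *)
Definition config := (int * int * shape_state)%type.

Definition allowed (c : config) (b' K : int) : bool :=
  let: (b, r, _) := c in chain_step b b' K && (slack b b' K <= r).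

Definition next (c : config) (b' K : int) : config :=
  let: (b, r, q) := c in (b', r - slack b b' K, shape_step q K).

(* By [chain_step_bounds], these ranges contain every step allowed from a
   configuration with [b <= 4] and [r <= 2], as checked by [invariant]. *)
Definition successors (c : config) : seq config :=
  flatten [seq [seq next c b' K | K <- zrange (-3) 8 & allowed c b' K]
          | b' <- zrange (-6) 11].

Definition initial : seq config := [seq (b, 2 - pot b, Pre) | b <- zrange (-1) 6].

Definition grow (cs : seq config) : seq config :=
  undup (cs ++ flatten (map successors cs)).

Definition reachable : seq config := iter 3 grow initial.

Definition accepts_last (c : config) : bool :=
  let: (b, r, q) := c in
  all (fun K => [&& allowed c 0 K, slack b 0 K == r & 0 <= K] ==> (shape_step q K == Acc))
      (zrange (-3) 8).

Definition invariant (cs : seq config) : bool :=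
  all (mem cs) initial &&
  all (fun c => let: (b, r, _) := c in
         [&& b <= 4, r <= 2, all (mem cs) (successors c) & accepts_last c]) cs.

Lemma invariant_reachable : invariant reachable.
Proof. by vm_compute. Qed.

Lemma mem_successors c b' K :
  allowed c b' K -> b' \in zrange (-6) 11 -> K \in zrange (-3) 8 ->
  next c b' K \in successors c.
Proof.
move=> ok hb' hK; apply/flattenP; eexists; first by apply/mapP; exists b'.
by apply: map_f; rewrite mem_filter ok.
Qed.

Lemma invariant_next cs c b' K : invariant cs ->
  c \in cs -> allowed c b' K -> next c b' K \in cs.
Proof.
case: c => [[b r] q] /andP[_ /allP inv] hc ok.
have /and4P[b_le r_le /allP succ _] := inv _ hc.
apply: succ; move: (ok) => /= /andP[step sl].
have /andP[hb' hK] := chain_step_bounds b_le step (le_trans sl r_le).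
by apply: mem_successors => //; apply: mem_zrange; lia.
Qed.

Lemma invariant_last cs c K : invariant cs ->
  c \in cs -> allowed c 0 K -> slack c.1.1 0 K = c.1.2 -> 0 <= K ->
  shape_step c.2 K = Acc.
Proof.
case: c => [[b r] q] /andP[_ /allP inv] hc ok /= sl K_ge0.
have /and4P[b_le r_le _ /allP last] := inv _ hc.
move: (ok) => /= /andP[step sl'].
have /andP[_ hK] := chain_step_bounds b_le step (le_trans sl' r_le).
have /(_ (mem_zrange _)) := last K.
by rewrite ok sl eqxx K_ge0 => /(_ hK)/implyP/(_ isT)/eqP.
Qed.

Section ChainRun.

Variables (N : nat) (b K : nat -> int).
Hypothesis N_gt0 : (0 < N)%N.
Hypothesis b_N : b N = 0.
Hypothesis step : forall k, (k < N)%N -> chain_step (b k) (b k.+1) (K k).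
Hypothesis sum_K : \sum_(k < N) K k = 1.

Definition budget (i : nat) : int := \sum_(i <= k < N) K k + 1 - pot (b i).

Lemma budgetS i : (i < N)%N -> budget i = budget i.+1 + slack (b i) (b i.+1) (K i).
Proof. by move=> lt_iN; rewrite /budget /slack big_ltn //; ring. Qed.

Lemma budget_ge0 i : (i <= N)%N -> 0 <= budget i.
Proof.
move=> le_iN; rewrite -(subKn le_iN).
elim: (N - i)%N (leq_subr i N) => [_|d IHd lt_dN].
  by rewrite subn0 /budget big_geq // b_N /pot.
have lt : (N - d.+1 < N)%N by lia.
have eS : (N - d.+1).+1 = (N - d)%N by lia.
rewrite budgetS // eS addr_ge0 ?IHd 1?ltnW //.
by rewrite -eS slack_ge0 ?step.
Qed.

Lemma budget0 : budget 0 = 2 - pot (b 0).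
Proof. by rewrite /budget big_mkord sum_K. Qed.

Lemma budget_last : budget N.-1 = slack (b N.-1) 0 (K N.-1).
Proof. by rewrite budgetS ?prednK // -b_N /budget big_geq // b_N /pot; lra. Qed.

Lemma run_prefixS i : shape_run Pre [seq K k | k <- iota 0 i.+1] =
  shape_step (shape_run Pre [seq K k | k <- iota 0 i]) (K i).
Proof. by rewrite -addn1 iotaD map_cat /shape_run foldl_cat. Qed.

Variable cs : seq config.
Hypothesis cs_inv : invariant cs.

Lemma config_invariant i : (i < N)%N ->
  (b i, budget i, shape_run Pre [seq K k | k <- iota 0 i]) \in cs.
Proof.
elim: i => [|i IHi] lt_iN.
  have := budget_ge0 (ltnW lt_iN); rewrite budget0 => r_ge0.
  case/andP: cs_inv => /allP init _; apply: init; apply/mapP; exists (b 0) => //.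
  by apply: mem_zrange; move: r_ge0; rewrite /pot; case: ifP; lia.
have lt : (i < N)%N by apply: ltnW.
rewrite run_prefixS (_ : budget i.+1 = budget i - slack (b i) (b i.+1) (K i)).
  apply: (invariant_next cs_inv (IHi lt)); rewrite /= step //.
  by rewrite -subr_ge0 (budgetS lt) addrK budget_ge0.
by rewrite (budgetS lt); ring.
Qed.

Lemma chain_run_accepts : 0 <= K N.-1 ->
  shape_run Pre [seq K k | k <- iota 0 N] = Acc.
Proof.
move=> K_ge0; have lt : (N.-1 < N)%N by rewrite prednK.
have last_step : chain_step (b N.-1) 0 (K N.-1).
  by have := step lt; rewrite prednK // b_N.
rewrite -(prednK N_gt0) run_prefixS.
apply: (invariant_last cs_inv (config_invariant lt));
  by rewrite /= ?budget_last ?last_step ?lexx.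
Qed.

End ChainRun.

Lemma chain_summand_steps ws j as_ l m n :
  all atomic_wf ws -> nth (Fermat 2) ws j = Chain as_ -> (j < size ws)%N ->
  type_Xm1 ws l m n ->
  let o := nvars (take j ws) in let N := size as_ in
  exists b : nat -> int,
    [/\ b N = 0,
        forall k, (k < N)%N -> Kvec ws l m n (o + k)%N = ((l (o + k)%N)%:Z + 1 - b k)%:~R
      & forall k, (k < N)%N -> chain_step (b k) (b k.+1) ((l (o + k)%N)%:Z + 1 - b k)].
Proof.
move=> wf nth_j lt_j [_ std_m std_n int_K _] o N.
have /andP[_ /allP a_ge2] : atomic_wf (Chain as_).
  by rewrite -nth_j; apply: (all_nthP _ wf).
have le_o : (o + N <= nvars ws)%N by have := nvars_take_nth lt_j; rewrite nth_j.
pose b k := if (k < N)%N then (l (o + k)%N)%:Z + 1 - numq (Kvec ws l m n (o + k)%N)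
            else 0.
have Kb k : (k < N)%N -> Kvec ws l m n (o + k)%N = ((l (o + k)%N)%:Z + 1 - b k)%:~R.
  move=> lt_k; have [z Kz] := int_K (o + k)%N ltac:(lia).
  by rewrite /b lt_k Kz numq_int; congr intr; ring.
have bvecb k : (k < N)%N -> bvec ws l m n (o + k) = (b k)%:~R.
  move=> lt_k; have := Kb k lt_k.
  by rewrite /Kvec rmorphB rmorphD /= -pmulrn; lra.
exists b; split => // [|k lt_k]; first by rewrite /b ltnn.
have [m_le n_le] := (std_basis_chain_le std_m lt_j nth_j lt_k,
                     std_basis_chain_le std_n lt_j nth_j lt_k).
have a_k : (2 <= nth 0%N as_ k)%N := a_ge2 _ (mem_nth 0%N lt_k).
rewrite -/o in m_le n_le.
apply: (@chain_step_of_row (nth 0%N as_ k) (m (o + k) + n (o + k))%N); first 3 last.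
- apply: (@intr_inj rat); have := bvec_chain_row l m n wf lt_j nth_j lt_k.
  have b_k1 : (if (k.+1 < N)%N then bvec ws l m n (o + k.+1) else 0) = (b k.+1)%:~R.
    case: ifP => [lt_k1|ge_k1]; [exact: bvecb | by rewrite /b ge_k1].
  rewrite /= -/o bvecb // b_k1 !rmorphD rmorphM /= -!pmulrn; lra.
all: lia.
Qed.

Theorem lemma6p13 (ws : seq atomic) (j : nat) (as_ : seq nat) (l m n : nat -> nat) :
  all atomic_wf ws ->
  nth (Fermat 2) ws j = Chain as_ ->
  (j < size ws)%N ->
  type_Xm1 ws l m n ->
  let o := nvars (take j ws) in
  let N := size as_ in
  \sum_(k < N) Kvec ws l m n (o + k) = 1 ->
  Kvec ws l m n (o + N.-1) <= (l (o + N.-1)%N)%:R /\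
  (0 <= Kvec ws l m n (o + N.-1) ->
   K_shape [seq Kvec ws l m n (o + k) | k <- iota 0 N]).
Proof.
move=> wf nth_j lt_j hX o N sum1.
have [b [b_N Kb step]] := chain_summand_steps wf nth_j lt_j hX.
have /andP[N_gt0 _] : atomic_wf (Chain as_) by rewrite -nth_j; apply: (all_nthP _ wf).
pose K k := (l (o + k)%N)%:Z + 1 - b k.
have sumK : \sum_(k < N) K k = 1.
  by apply: (@intr_inj rat); rewrite rmorph_sum -sum1; apply: eq_bigr => k _; rewrite Kb.
have lt_N1 : (N.-1 < N)%N by rewrite prednK.
have last_step : chain_step (b N.-1) 0 (K N.-1).
  by have := step _ lt_N1; rewrite prednK // b_N.
rewrite Kb // -/o; split.
  by rewrite pmulrn ler_int; have := chain_step_last last_step; lia.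
rewrite ler0z => K_ge0.
have := shape_run_sound (chain_run_accepts N_gt0 b_N step sumK invariant_reachable K_ge0).
congr K_shape; rewrite -map_comp; apply/eq_in_map => k.
by rewrite mem_iota => /andP[_ lt_k]; rewrite /= Kb.
Qed.
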